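(* Let $1\le j<n$ with $\gcd(n,j)=1$, $k=n-j$, let $a\in\overline L^\times$, and let $X\in\overline L$ satisfy $X^{q^k-1}=a$. Then the elements $g\in\overline L$ satisfying $$\frac{1}{a}\,g^{q^k}-\frac{1}{a^{q^j}}\,g-a^{q^n-1}+1=0$$ are exactly $$g=\frac{X^{q^n-1}+c}{X^{q^j-1}},\qquad c\in\mathbb{F}_{q^k},$$ and for such $g$ the element $h=-a^{q^n}+a+g^{q^k}$ equals $$h=\frac{X^{q^n-1}+c}{X^{q^n-q^k}}.$$
   Context: $q$ is a prime power and $\overline L$ is an algebraically closed field containing $\mathbb{F}_q$. *)

From HB Require Import structures.
From mathcomp Require Import all_boot all_order all_algebra all_field.
Set Implicit Arguments. Unset Strict Implicit. Unset Printing Implicit Defensive.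
Import GRing.Theory.
Local Open Scope ring_scope.

(* The subfield F_{q^m} of a field L containing F_q (with q a power of char L):
   the set of x with x^(q^m) = x. *)
Definition in_Fqm (L : fieldType) (q m : nat) (x : L) : bool :=
  x ^+ (q ^ m) == x.

From HB Require Import structures.
From mathcomp Require Import all_boot all_order all_algebra all_field.
From mathcomp Require Import ring.
Set Implicit Arguments. Unset Strict Implicit. Unset Printing Implicit Defensive.
Import GRing.Theory.
Local Open Scope ring_scope.

(* Proof of Proposition 4.2.  Write u_m := X^(q^m), so that, since X != 0,
   X^(q^m - 1) = u_m / X and a = X^(q^k - 1) = u_k / X.  Because q is a power
   of the characteristic, x |-> x^(q^m) is a field endomorphism (Frobenius),
   and it sends u_l to u_(l+m).
   Every g can be written as g = (X^(q^n-1) + c) / X^(q^j-1) with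
   c := g X^(q^j-1) - X^(q^n-1) (lemma [param_surj]).  Substituting this
   parametrisation into the left-hand side of the equation and applying
   Frobenius, everything cancels except one term (lemma [eqn_lhs_param]):
       LHS(g) = (c^(q^k) - c) * X / u_n,
   so g is a solution exactly when c^(q^k) = c, i.e. c lies in F_{q^k}. *)

Section FrobeniusParametrisation.

Variables (L : fieldType) (q : nat).
(* q is a power of the characteristic of L, so x |-> x^(q^m) is additive. *)
Hypothesis q_pchar : [pchar L].-nat q.

Variables (n j k : nat).
Hypothesis n_split : n = (k + j)%N.

Variable X : L.
Hypothesis X_neq0 : X != 0.

Let a : L := X ^+ (q ^ k - 1).

Definition eqn_lhs (g : L) : L :=
  a^-1 * g ^+ (q ^ k) - (a ^+ (q ^ j))^-1 * g - a ^+ (q ^ n - 1) + 1.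

Definition param (c : L) : L := (X ^+ (q ^ n - 1) + c) / X ^+ (q ^ j - 1).

Lemma qpow_pchar (m : nat) : [pchar L].-nat (q ^ m)%N.
Proof. by rewrite pnatX q_pchar. Qed.

Lemma frobD (m : nat) (x y : L) : (x + y) ^+ (q ^ m) = x ^+ (q ^ m) + y ^+ (q ^ m).
Proof. exact: exprDn_pchar (qpow_pchar m). Qed.

Lemma frobK (m l : nat) (x : L) : (x ^+ (q ^ l)) ^+ (q ^ m) = x ^+ (q ^ (l + m)).
Proof. by rewrite -exprM expnD. Qed.

Lemma expr_qpred (m : nat) (x : L) : x != 0 -> x ^+ (q ^ m - 1) = x ^+ (q ^ m) / x.
Proof.
move=> x_neq0; have /andP[qm_gt0 _] := qpow_pchar m.
by rewrite exprB ?unitfE // expr1.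
Qed.

Lemma frobX_neq0 (m : nat) : X ^+ (q ^ m) != 0.
Proof. by rewrite expf_neq0. Qed.

Lemma param_surj (g : L) : g = param (g * X ^+ (q ^ j - 1) - X ^+ (q ^ n - 1)).
Proof.
by rewrite /param addrC subrK mulfK // expf_neq0.
Qed.

Lemma frob_param (c : L) :
  param c ^+ (q ^ k) =
  (X ^+ (q ^ (n + k)) / X ^+ (q ^ k) + c ^+ (q ^ k)) / (X ^+ (q ^ n) / X ^+ (q ^ k)).
Proof.
rewrite /param !expr_qpred // exprMn exprVn frobD !exprMn !exprVn !frobK.
by rewrite [(j + k)%N]addnC -n_split.
Qed.

Lemma aE : a = X ^+ (q ^ k) / X.
Proof. exact: expr_qpred. Qed.

Lemma frob_a (m : nat) : a ^+ (q ^ m) = X ^+ (q ^ (k + m)) / X ^+ (q ^ m).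
Proof. by rewrite aE exprMn exprVn frobK. Qed.

Lemma eqn_lhs_param (c : L) :
  eqn_lhs (param c) = (c ^+ (q ^ k) - c) * X / X ^+ (q ^ n).
Proof.
have a_neq0 : a != 0 by rewrite expf_neq0.
rewrite /eqn_lhs frob_param expr_qpred // !frob_a -n_split [(k + n)%N]addnC aE.
by rewrite /param !expr_qpred //; field; rewrite X_neq0 !frobX_neq0.
Qed.

Lemma h_param (c : L) : c ^+ (q ^ k) = c ->
  - a ^+ (q ^ n) + a + param c ^+ (q ^ k) =
  (X ^+ (q ^ n - 1) + c) / X ^+ (q ^ n - q ^ k).
Proof.
move=> c_fixed; have qk_le_qn : (q ^ k <= q ^ n)%N.
  by have /andP[q_gt0 _] := q_pchar; rewrite leq_pexp2l // n_split leq_addr.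
rewrite frob_param c_fixed frob_a [(k + n)%N]addnC aE expr_qpred // exprB ?unitfE //.
by field; rewrite X_neq0 !frobX_neq0.
Qed.

End FrobeniusParametrisation.

Theorem proposition4p2 (L : closedFieldType) (p e q : nat)
  (hp : prime p) (hchar : p \in [pchar L]) (he : (0 < e)%N) (hq : q = (p ^ e)%N)
  (n j k : nat) (hj1 : (1 <= j)%N) (hjn : (j < n)%N) (hcop : coprime n j)
  (hk : k = (n - j)%N)
  (a X : L) (ha : a != 0) (hX : X ^+ (q ^ k - 1) = a) :
  (forall g : L,
     (a^-1 * g ^+ (q ^ k) - (a ^+ (q ^ j))^-1 * g - a ^+ (q ^ n - 1) + 1 = 0)
     <->
     (exists c : L, in_Fqm q k c /\
        g = (X ^+ (q ^ n - 1) + c) / X ^+ (q ^ j - 1)))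
  /\
  (forall c : L, in_Fqm q k c ->
     let g := (X ^+ (q ^ n - 1) + c) / X ^+ (q ^ j - 1) in
     - a ^+ (q ^ n) + a + g ^+ (q ^ k) = (X ^+ (q ^ n - 1) + c) / X ^+ (q ^ n - q ^ k)).
Proof.
have q_pchar : [pchar L].-nat q.
  by rewrite hq pnatX (eq_pnat _ (pcharf_eq hchar)) pnat_id.
have n_split : n = (k + j)%N by rewrite hk subnK // ltnW.
(* a = X^(q^k - 1) is nonzero and q^k > 1, hence X is nonzero. *)
have X_neq0 : X != 0.
  have qk_gt1 : (1 < q ^ k)%N.
    by rewrite hq -expnM -{1}(expn0 p) ltn_exp2l ?prime_gt1 // muln_gt0 he hk subn_gt0.
  by apply: contraNneq ha => X0; rewrite -hX X0 expr0n subn_eq0 leqNgt qk_gt1.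
subst a; split=> [g | c /eqP c_fixed]; last exact: h_param.
change (eqn_lhs q n j k X g = 0 <-> exists c, in_Fqm q k c /\ g = param q n j X c).
split=> [lhs0 | [c [/eqP c_fixed ->]]]; last first.
  by rewrite eqn_lhs_param // c_fixed subrr !mul0r.
exists (g * X ^+ (q ^ j - 1) - X ^+ (q ^ n - 1)); split; last exact: param_surj.
move: lhs0; rewrite {1}(@param_surj _ q n j _ X_neq0 g) eqn_lhs_param // => /eqP.
by rewrite !mulf_eq0 invr_eq0 (negbTE X_neq0) expf_eq0 (negbTE X_neq0) andbF !orbF subr_eq0.
Qed.
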